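(* Let $G\in\mathcal{G}$ be a graph, let $t\in T_G$, and let $\epsilon$ be an internal edge of the binary tree $t$. Then there exist a unique tree $t'\in T_G$ with $t'\neq t$ and a unique internal edge $\epsilon'$ of $t'$ such that $t/\epsilon=t'/\epsilon'$ (equality of trees with leaves labeled by the vertices of $G$).
   Context: A graph is a triple $(\Gamma,\sigma,\lambda)$: a finite set $\Gamma$ of flags (half-edges), an involution $\sigma$ of $\Gamma$ (two-element orbits are edges, fixed points are legs), and a partition $\lambda$ of $\Gamma$ whose blocks are the vertices. $\mathcal{G}$ denotes the set of isomorphism classes of directed, connected graphs with labeled input and output legs and without directed cycles (directed: each vertex's flags are split into inputs and outputs, and each edge joins an output flag to an input flag). For two vertices $v,v'$, the thick edge from $v$ to $v'$ is the set of all directed edges from $v$ to $v'$; a directed path/cycle is a sequence of thick edges following directions. Contracting a thick edge $\epsilon$ between $v_i,v_j$ gives the graph $G/\epsilon$ in which $v_i,v_j$ are replaced by the single vertex $(v_i\sqcup v_j)\smallsetminus\{\text{flags of }\epsilon\}$; $\epsilon$ is admissible if $G/\epsilon$ has no directed cycles. For $G$ with $k$ vertices, a contraction sequence is a sequence of $k-1$ thick edges, each admissible in the graph obtained by contracting the previous ones, thus reducing $G$ to a one-vertex graph. To a contraction sequence one associates a binary rooted tree whose leaves are labeled by the vertices of $G$ and whose internal vertices correspond to the successive contractions (the vertex for the $i$-th contraction has as children the subtrees corresponding to the two vertices merged). $T_G$ is the set of such binary trees arising from contraction sequences of $G$ (equivalently, contraction sequences modulo the equivalence identifying sequences with isomorphic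 associated trees). An internal edge of $t$ is an edge between two internal vertices of $t$; $t/\epsilon$ denotes the (no longer binary) tree obtained by contracting it. *)

From HB Require Import structures.
From mathcomp Require Import all_boot.

Set Implicit Arguments.
Unset Strict Implicit.
Unset Printing Implicit Defensive.

(* Graphs (Gamma, sigma, lambda) with a direction on flags.                  *)
(*   vert G : the vertices, i.e. the blocks of lambda; lam f is the block     *)
(*            containing f (lam is required to be surjective: blocks are     *)
(*            nonempty)                                                      *)
(*   sigma  : the involution (2-orbits = edges, fixed points = legs)         *)
Record dgraph := DGraph {
  flag : finType;
  vert : finType;
  sigma : flag -> flag;
  lam : flag -> vert;
  is_out : pred flag
}.

Section Graphs.
Variable G : dgraph.

Definition involutive_sigma := forall f : flag G, sigma (sigma f) = f.
Definition lam_surjective := forall v : vert G, exists f, lam f = v.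
Definition edges_directed :=
  forall f : flag G, sigma f != f -> is_out f != is_out (sigma f).

Definition gedge : rel (vert G) := fun u v =>
  [exists f : flag G, [&& sigma f != f, is_out f, lam f == u & lam (sigma f) == v]].

(* no directed cycle (a self-loop counts as a directed cycle) *)
Definition g_acyclic := forall u v, gedge u v -> ~~ connect gedge v u.
Definition g_connected :=
  forall u v, connect (fun x y => gedge x y || gedge y x) u v.

(* G belongs to the class \mathcal{G} (leg labelings are irrelevant here) *)
Definition in_calG :=
  [/\ involutive_sigma, lam_surjective, edges_directed, g_connected & g_acyclic].

(* Graphs obtained from G by successive contractions of thick edges.          *)
(* Such a graph is described by the partition P of vert G into the sets of     *)
(* original vertices that have been merged.  Its edges are the edges of G     *)
(* joining different blocks (edges inside a block are exactly the flags of    *)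
(* the contracted thick edges).                                              *)
Definition partition_graph := {set {set vert G}}.

Definition qedge (P : partition_graph) : rel {set vert G} := fun A B =>
  [&& A \in P, B \in P, A != B &
      [exists f : flag G,
         [&& sigma f != f, is_out f, lam f \in A & lam (sigma f) \in B]]].

Definition q_acyclic (P : partition_graph) :=
  [forall A, forall B, qedge P A B ==> ~~ connect (qedge P) B A].

Definition merge (P : partition_graph) (A B : {set vert G}) : partition_graph :=
  (P :\ A :\ B) :|: [set A :|: B].

Definition P0 : partition_graph := [set [set v] | v : vert G].

Fixpoint is_cseq (P : partition_graph) (s : seq ({set vert G} * {set vert G}))
  : bool :=
  match s with
  | [::] => #|P| == 1
  | (A, B) :: s' =>
      [&& qedge P A B, q_acyclic (merge P A B) & is_cseq (merge P A B) s']
  end.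

(* Rooted trees with leaves labeled (bijectively) by vert G and with all     *)
(* internal vertices of out-degree >= 2 are represented, up to isomorphism   *)
(* of leaf-labeled trees, by their set of clusters: the set of leaf-label     *)
(* sets of the subtrees rooted at each vertex.  Leaves are the singleton      *)
(* clusters, internal vertices the clusters of size >= 2.                     *)
Definition ltree := {set {set vert G}}.

(* binary tree associated to a contraction sequence: one leaf per vertex,     *)
(* and the internal vertex of the i-th contraction has as leaf set the union  *)
(* of the two merged vertices.                                              *)
Definition tree_of (s : seq ({set vert G} * {set vert G})) : ltree :=
  P0 :|: [set X in [seq p.1 :|: p.2 | p <- s]].

Definition in_TG (t : ltree) := exists s, is_cseq P0 s /\ tree_of s = t.

Definition tedge (t : ltree) (P C : {set vert G}) :=
  [&& P \in t, C \in t, C \proper P &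
      [forall X in t, ~~ ((C \proper X) && (X \proper P))]].

(* internal edge: both endpoints internal (the parent is then automatically  *)
(* internal)                                                                 *)
Definition internal_edge (t : ltree) (P C : {set vert G}) :=
  tedge t P C && (1 < #|C|) && (1 < #|P|).

(* t / (P, C): contracting the edge removes the vertex C, its children       *)
(* becoming children of P.                                                  *)
Definition contract (t : ltree) (C : {set vert G}) : ltree := t :\ C.

End Graphs.

From Pilot Require Import Defs.
From mathcomp Require Import all_boot zify.

Set Implicit Arguments.
Unset Strict Implicit.
Unset Printing Implicit Defensive.

(** A tree of T_G is the set of clusters created by a contraction sequence: it
is laminar, and every internal cluster is the union of two clusters X, Y such
that the edges of G between X and Y all go the same way.  Let C = A ∪ B be a
child of P = C ∪ D in t.  Any other tree with the same contraction t/(P, C)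
must have a child N ∪ D of P with N ∈ {A, B}, and the edges between N and D,
and between N ∪ D and the remaining block, must again go one way.  These
one-way conditions cannot hold for both N = A and N = B, given that A + B and
(A ∪ B) + D were legal merges for t (a check on the six arc directions between
A, B, D); this gives uniqueness.  For existence, postpone the merge of A and B
in a sequence producing t until C and D meet, and replace the merges A + B and
C + D by N + D and (N ∪ D) + M, with N chosen by the arc directions between
A, B and D.  The intermediate graphs stay acyclic because they refine an
acyclic graph and the new blocks can be ranked between the old ones. *)

Lemma path_rank_le (T : Type) (e : rel T) (r : T -> nat) :
  (forall x y, e x y -> r x < r y) -> forall p x, path e x p -> r x <= r (last x p).
Proof.
move=> he; elim=> [|y p IH] x //= /andP[hxy hp].
exact: leq_trans (ltnW (he _ _ hxy)) (IH _ hp).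
Qed.

Local Notation merge := Defs.merge.

Section ContractionTrees.
Variable G : dgraph.
Local Notation sT := {set vert G}.

(** * Disjoint vertex sets *)

Lemma disjoint_memP (X Y : sT) :
  reflect (forall x, x \in X -> x \in Y -> False) [disjoint X & Y].
Proof.
apply: (iffP idP) => [h x hx hy | h]; first by rewrite (disjointFr h hx) in hy.
rewrite disjoint_subset; apply/subsetP => x hx; rewrite inE; apply/negP; exact: h.
Qed.

Lemma disjoint_mem2 (X Y : sT) x : [disjoint X & Y] -> x \in X -> x \in Y -> False.
Proof. by move/disjoint_memP; apply. Qed.

Lemma disjoint_setU (X Y Z : sT) :
  [disjoint X & Y] -> [disjoint X & Z] -> [disjoint X & Y :|: Z].
Proof.
move=> d1 d2; apply/disjoint_memP => x hx; rewrite inE => /orP[] h.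
  exact: (disjoint_mem2 d1 hx h).
exact: (disjoint_mem2 d2 hx h).
Qed.

Lemma disjoint_neq (A B : sT) : A != set0 -> [disjoint A & B] -> A != B.
Proof.
move=> /set0Pn[a ha] d; apply/eqP => eAB.
by rewrite -eAB in d; exact: (disjoint_mem2 d ha ha).
Qed.

Lemma properU_disjoint (Y W : sT) : W != set0 -> [disjoint Y & W] -> Y \proper Y :|: W.
Proof.
move=> /set0Pn[w hw] d; apply: properUl; apply/subsetPn; exists w => //.
by apply/negP => /(disjoint_mem2 d); apply.
Qed.

Lemma setU_neq_l (A B : sT) : B != set0 -> [disjoint A & B] -> A != A :|: B.
Proof. by move=> hB d; apply/proper_neq/properU_disjoint. Qed.

Lemma subsetU_disjointl (Z X Y : sT) : Z \subset X :|: Y -> [disjoint Z & X] -> Z \subset Y.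
Proof.
move=> /subsetP h hd; apply/subsetP => z hz.
move: (h z hz); rewrite inE => /orP[hx|//]; case: (disjoint_mem2 hd hz hx).
Qed.

Lemma subsetU_disjointr (Z X Y : sT) : Z \subset X :|: Y -> [disjoint Z & Y] -> Z \subset X.
Proof. by rewrite setUC; apply: subsetU_disjointl. Qed.

Lemma setU_cancell (Y X U : sT) : Y :|: X = X :|: U -> [disjoint Y & X] -> [disjoint X & U] ->
  Y = U.
Proof.
move=> e d1 d2; apply/setP => x; apply/idP/idP => hx.
  have : x \in X :|: U by rewrite -e inE hx.
  rewrite inE => /orP[h|//]; case: (disjoint_mem2 d1 hx h).
have : x \in Y :|: X by rewrite e inE hx orbT.
rewrite inE => /orP[//|h]; case: (disjoint_mem2 d2 h hx).
Qed.

Lemma setU_subset_eq (U V X Y : sT) : U :|: V = X :|: Y -> U \subset X -> V \subset Y ->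
  [disjoint X & Y] -> U = X /\ V = Y.
Proof.
move=> e hU hV hd; split; apply/eqP; rewrite eqEsubset ?hU ?hV /=; apply/subsetP => x hx.
- have : x \in U :|: V by rewrite e inE hx.
  rewrite inE => /orP[//|xv]; case: (disjoint_mem2 hd hx (subsetP hV _ xv)).
- have : x \in U :|: V by rewrite e inE hx orbT.
  rewrite inE => /orP[xu|//]; case: (disjoint_mem2 hd (subsetP hU _ xu) hx).
Qed.

Lemma setU_sub_disjointF (U V X Y : sT) : U :|: V = X :|: Y -> U \subset X -> V \subset X ->
  Y != set0 -> [disjoint X & Y] -> False.
Proof.
move=> e hU hV /set0Pn[y hy] hd.
have : y \in U :|: V by rewrite e inE hy orbT.
rewrite inE => /orP[h|h];
  [exact: (disjoint_mem2 hd (subsetP hU _ h) hy) | exact: (disjoint_mem2 hd (subsetP hV _ h) hy)].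
Qed.

Lemma setU_meets_disjointF (x : vert G) (X Y W U U' : sT) : x \in X -> x \in Y :|: W ->
  Y \subset U -> W \subset U' ->
  [disjoint U & X] -> [disjoint U' & X] -> False.
Proof.
move=> hx; rewrite inE => /orP[h|h] hY hW d1 d2.
  exact: (disjoint_mem2 d1 (subsetP hY _ h) hx).
exact: (disjoint_mem2 d2 (subsetP hW _ h) hx).
Qed.

Lemma three_blocks_no_two (A B D Y W : sT) : A != set0 -> B != set0 -> D != set0 ->
  [disjoint A & B] -> [disjoint A & D] -> [disjoint B & D] ->
  Y :|: W = (A :|: B) :|: D ->
  [|| Y \subset A, Y \subset B | Y \subset D] -> [|| W \subset A, W \subset B | W \subset D] ->
    False.
Proof.
move=> /set0Pn[a ha] /set0Pn[b hb] /set0Pn[d hd] dAB dAD dBD e.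
have dBA : [disjoint B & A] by rewrite disjoint_sym.
have dDA : [disjoint D & A] by rewrite disjoint_sym.
have dDB : [disjoint D & B] by rewrite disjoint_sym.
have ia : a \in Y :|: W by rewrite e !inE ha.
have ib : b \in Y :|: W by rewrite e !inE hb orbT.
have id : d \in Y :|: W by rewrite e !inE hd orbT.
case/or3P => hY; case/or3P => hW.
- exact: (setU_meets_disjointF hb ib hY hW).
- exact: (setU_meets_disjointF hd id hY hW).
- exact: (setU_meets_disjointF hb ib hY hW).
- exact: (setU_meets_disjointF hd id hY hW).
- exact: (setU_meets_disjointF ha ia hY hW).
- exact: (setU_meets_disjointF ha ia hY hW).
- exact: (setU_meets_disjointF hb ib hY hW).
- exact: (setU_meets_disjointF ha ia hY hW).
- exact: (setU_meets_disjointF ha ia hY hW).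
Qed.

Lemma straddle_blocksF (N M D X : sT) :
  N != set0 -> D != set0 -> [disjoint N & M] -> [disjoint N & D] ->
  N :|: D \subset X -> [|| X \subset N, X \subset M | X \subset D] -> False.
Proof.
move=> /set0Pn[n hn] /set0Pn[d hd] dNM dND /subsetP sX.
have hnX : n \in X by apply: sX; rewrite inE hn.
have hdX : d \in X by apply: sX; rewrite inE hd orbT.
case/or3P => /subsetP hs.
- exact: (disjoint_mem2 dND (hs _ hdX) hd).
- exact: (disjoint_mem2 dNM hn (hs _ hnX)).
- exact: (disjoint_mem2 dND hn (hs _ hnX)).
Qed.

Lemma properU_mid (N M D : sT) :
  M != set0 -> [disjoint N & M] -> [disjoint M & D] -> N :|: D \proper N :|: M :|: D.
Proof.
move=> hM0 dNM dMD; rewrite setUAC; apply: properU_disjoint => //.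
by rewrite disjoint_sym disjoint_setU // disjoint_sym.
Qed.

Lemma card_setU_gt1 (N D : sT) : N != set0 -> D != set0 -> [disjoint N & D] -> 1 < #|N :|: D|.
Proof.
move=> /set0Pn[n hn] /set0Pn[d hd] dd; apply/card_gt1P; exists n, d; split.
- by rewrite inE hn.
- by rewrite inE hd orbT.
- by apply/negP => /eqP e; rewrite e in hn; exact: (disjoint_mem2 dd hn hd).
Qed.


(** * Arcs between vertex sets *)

Definition arc (X Y : sT) := [exists f : flag G,
  [&& sigma f != f, is_out f, lam f \in X & lam (sigma f) \in Y]].

Lemma qedgeE (R : {set sT}) X Y : qedge R X Y = [&& X \in R, Y \in R, X != Y & arc X Y].
Proof. by []. Qed.

Lemma arcUl (X Y Z : sT) : arc (X :|: Y) Z = arc X Z || arc Y Z.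
Proof.
apply/existsP/orP => [[f]|[]/existsP[f]].
  rewrite in_setU => /and4P[a b /orP[c|c] d]; [left|right]; apply/existsP; exists f; exact/and4P.
  move=> /and4P[a b c d]; exists f; rewrite in_setU c ?orbT; exact/and4P.
move=> /and4P[a b c d]; exists f; rewrite in_setU c ?orbT; exact/and4P.
Qed.

Lemma arcUr (X Y Z : sT) : arc Z (X :|: Y) = arc Z X || arc Z Y.
Proof.
apply/existsP/orP => [[f]|[]/existsP[f]].
  rewrite in_setU => /and4P[a b c /orP[d|d]]; [left|right]; apply/existsP; exists f; exact/and4P.
  move=> /and4P[a b c d]; exists f; rewrite in_setU d ?orbT; exact/and4P.
move=> /and4P[a b c d]; exists f; rewrite in_setU d ?orbT; exact/and4P.
Qed.

Lemma arcS (X Y X' Y' : sT) : X \subset X' -> Y \subset Y' -> arc X Y -> arc X' Y'.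
Proof.
move=> /subsetP h1 /subsetP h2 /existsP[f /and4P[a b c d]].
apply/existsP; exists f; rewrite a b h1 // h2 //.
Qed.

Definition one_way (X Y : sT) := (arc X Y && ~~ arc Y X) || (arc Y X && ~~ arc X Y).

Lemma one_wayC X Y : one_way X Y = one_way Y X.
Proof. by rewrite /one_way orbC. Qed.

Lemma one_way_triangleF (A B D : sT) : one_way A B -> one_way (A :|: B) D -> one_way A D ->
  one_way (A :|: D) B ->
  one_way B D -> one_way (B :|: D) A -> False.
Proof.
rewrite /one_way !arcUl !arcUr.
by case: (arc A B); case: (arc B A); case: (arc A D); case: (arc D A); case: (arc B D);
  case: (arc D B).
Qed.

(** * Contraction sequences and their clusters *)

Definition disjoint_blocks (R : {set sT}) :=
  (forall X, X \in R -> X != set0) /\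
  (forall X Y, X \in R -> Y \in R -> X != Y -> [disjoint X & Y]).

Definition no_2cycle (R : {set sT}) := forall X Y, qedge R X Y -> ~~ qedge R Y X.

Fixpoint admissible (R : {set sT}) (s : seq (sT * sT)) : bool :=
  match s with
  | [::] => true
  | (A, B) :: s' => [&& qedge R A B, q_acyclic (merge R A B) & admissible (merge R A B) s']
  end.

Definition merge_seq (R : {set sT}) (s : seq (sT * sT)) :=
  foldl (fun R p => merge R p.1 p.2) R s.

Lemma merge_seq_cons R p s : merge_seq R (p :: s) = merge_seq (merge R p.1 p.2) s.
Proof. by []. Qed.

Lemma merge_seq_cat R s1 s2 : merge_seq R (s1 ++ s2) = merge_seq (merge_seq R s1) s2.
Proof. by rewrite /merge_seq foldl_cat. Qed.

Lemma admissible_cons R p s : admissible R (p :: s) =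
  [&& qedge R p.1 p.2, q_acyclic (merge R p.1 p.2) & admissible (merge R p.1 p.2) s].
Proof. by case: p. Qed.

Lemma admissible_cat R s1 s2 : admissible R (s1 ++ s2) = admissible R s1 && admissible
  (merge_seq R s1) s2.
Proof.
elim: s1 R => [|p s1 IH] R //.
by rewrite cat_cons !admissible_cons IH merge_seq_cons !andbA.
Qed.

Lemma is_cseqE R s : is_cseq R s = admissible R s && (#|merge_seq R s| == 1).
Proof.
elim: s R => [|[A B] s IH] R //=.
by rewrite IH !andbA.
Qed.

Definition clusters (R : {set sT}) (s : seq (sT * sT)) :=
  R :|: [set X in [seq p.1 :|: p.2 | p <- s]].

Lemma tree_ofE s : tree_of s = clusters (P0 G) s.
Proof. by []. Qed.

Lemma clusters_cons R p s : clusters R (p :: s) = R :|: clusters (merge R p.1 p.2) s.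
Proof.
apply/setP=> Z; rewrite /clusters /Defs.merge !inE /=.
by case: (Z \in R); case: (Z == p.1 :|: p.2); rewrite ?orbT ?andbF.
Qed.

Lemma in_clusters_cons R p s Z : (Z \in clusters R (p :: s)) = (Z \in R) || (Z \in clusters
  (merge R p.1 p.2) s).
Proof. by rewrite clusters_cons in_setU. Qed.

Lemma merge_seq_sub_clusters R s : merge_seq R s \subset clusters R s.
Proof.
elim: s R => [|p s IH] R; first by rewrite /clusters subsetUl.
rewrite merge_seq_cons clusters_cons; apply: subset_trans (IH _) _; exact: subsetUr.
Qed.

Lemma merge_disjoint_blocks R A B : disjoint_blocks R -> A \in R -> B \in R -> A != B ->
  disjoint_blocks (merge R A B).
Proof.
move=> [h1 h2] hA hB nAB; split.
  move=> X; rewrite /Defs.merge !inE => /orP[/and3P[_ _ /h1//]|/eqP->].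
  by rewrite setU_eq0 negb_and h1.
have key X : X \in R -> X != A -> X != B -> [disjoint X & A :|: B].
  by move=> hX xa xb; apply: disjoint_setU; apply: h2.
move=> X Y; rewrite /Defs.merge !inE => /orP[/and3P[xb xa hX]|/eqP->] /orP[/and3P[yb ya hY]|/eqP->].
- exact: h2.
- by move=> _; rewrite key.
- by move=> _; rewrite disjoint_sym key.
- by rewrite eqxx.
Qed.

Lemma admissible_disjoint_blocks R s : admissible R s -> disjoint_blocks R ->
  disjoint_blocks (merge_seq R s).
Proof.
elim: s R => [|[A B] s IH] R //= /and3P[/and4P[hA hB nAB _] _ hv] hp.
exact/IH/merge_disjoint_blocks.
Qed.

Lemma in_merge (R : {set sT}) A B X :
  (X \in merge R A B) = [&& X != B, X != A & X \in R] || (X == A :|: B).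
Proof. by rewrite /Defs.merge !inE. Qed.

Lemma q_acyclic_no_2cycle R : q_acyclic R -> no_2cycle R.
Proof.
move=> /forallP h X Y hXY; apply/negP => hYX.
by move: (h X) => /forallP/(_ Y); rewrite hXY /= (connect1 hYX).
Qed.

Lemma P0_disjoint_blocks : disjoint_blocks (P0 G).
Proof.
split.
  move=> X /imsetP[v _ ->]; apply/negP => /eqP h.
  by have := set11 v; rewrite h inE.
move=> X Y /imsetP[u _ ->] /imsetP[v _ ->] nuv; apply/disjoint_memP => x.
by rewrite !inE => /eqP-> /eqP e; rewrite e eqxx in nuv.
Qed.

Lemma arc1 u v : arc [set u] [set v] = gedge u v.
Proof. by apply: eq_existsb => f; rewrite !in_set1. Qed.

Lemma P0_no_2cycle : g_acyclic G -> no_2cycle (P0 G).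
Proof.
move=> hg X Y; rewrite !qedgeE => /and4P[/imsetP[u _ ->] /imsetP[v _ ->] _].
rewrite arc1 => huv; apply/negP => /and4P[_ _ _]; rewrite arc1 => hvu.
by have := hg _ _ huv; rewrite (connect1 hvu).
Qed.

Lemma admissible_no_2cycle R s : admissible R s -> no_2cycle R -> no_2cycle (merge_seq R s).
Proof.
elim: s R => [|[A B] s IH] R //= /and3P[_ hq hv] _.
exact/IH/q_acyclic_no_2cycle.
Qed.

Definition nested_or_disjoint (X Y : sT) := [|| X \subset Y, Y \subset X | [disjoint X & Y]].

Lemma clusters_nested_blocks R s : admissible R s -> disjoint_blocks R -> forall Z,
  Z \in clusters R s ->
  forall X, X \in R -> (X \subset Z) || [disjoint X & Z].
Proof.
elim: s R => [|[A B] s IH] R.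
  move=> _ [_ hp] Z; rewrite /clusters inE => /orP[hZ|]; last by rewrite inE.
  move=> X hX; case: (eqVneq X Z) => [->|ne]; first by rewrite subxx.
  by rewrite hp ?orbT.
move=> /= /and3P[/and4P[hA hB nAB hAB] hq hv] hpR.
have hpM := merge_disjoint_blocks hpR hA hB nAB.
move=> Z; rewrite in_clusters_cons => /orP[hZ|hZ] X hX.
  case: (eqVneq X Z) => [->|ne]; first by rewrite subxx.
  by rewrite hpR.2 ?orbT.
have IH' := IH _ hv hpM Z hZ.
have hU : A :|: B \in merge R A B by rewrite in_merge eqxx orbT.
case: (eqVneq X A) => [eXA|nXA]; last case: (eqVneq X B) => [eXB|nXB].
- have /orP[h|h] := IH' (A :|: B) hU.
    by rewrite eXA (subset_trans (subsetUl _ _) h).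
  by rewrite eXA (disjointWl (subsetUl _ _) h) orbT.
- have /orP[h|h] := IH' (A :|: B) hU.
    by rewrite eXB (subset_trans (subsetUr _ _) h).
  by rewrite eXB (disjointWl (subsetUr _ _) h) orbT.
apply: IH'; by rewrite in_merge nXA nXB hX.
Qed.

Lemma clusters_laminar R s : admissible R s -> disjoint_blocks R -> forall X Y,
  X \in clusters R s -> Y \in clusters R s -> nested_or_disjoint X Y.
Proof.
elim: s R => [|[A B] s IH] R hv hp X Y.
  rewrite /clusters !inE /= !orbF => hX hY; case: (eqVneq X Y) => [->|ne];
    first by rewrite /nested_or_disjoint subxx.
  by rewrite /nested_or_disjoint hp.2 ?orbT.
move=> hX hY; have hX' := hX; have hY' := hY.
move: hX hY; rewrite !in_clusters_cons => /orP[hX|hX] /orP[hY|hY].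
- have /orP[h|h] := clusters_nested_blocks hv hp hY' hX; by rewrite /nested_or_disjoint h ?orbT.
- have /orP[h|h] := clusters_nested_blocks hv hp hY' hX; by rewrite /nested_or_disjoint h ?orbT.
- have /orP[h|h] := clusters_nested_blocks hv hp hX' hY; rewrite /nested_or_disjoint;
    [by rewrite h orbT | by rewrite disjoint_sym h !orbT].
move: hv => /= /and3P[/and4P[hA hB nAB _] _ hv].
exact: (IH _ hv (merge_disjoint_blocks hp hA hB nAB)).
Qed.

Lemma clusters_catl R s1 s2 : clusters R s1 \subset clusters R (s1 ++ s2).
Proof.
apply/subsetP => Z; rewrite /clusters !inE => /orP[->//|h].
by rewrite map_cat mem_cat h !orbT.
Qed.

Lemma clusters_cat_cons R s1 q s2 :
  clusters R (s1 ++ q :: s2) = clusters R (s1 ++ s2) :|: [set q.1 :|: q.2].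
Proof.
apply/setP => Z; rewrite /clusters !inE !map_cat !mem_cat /= in_cons.
by case: (Z \in R); case: (Z == q.1 :|: q.2); rewrite /= ?orbT ?orbF.
Qed.

Lemma clusters_step R s Z : Z \in clusters R s -> Z \notin R ->
  exists s1 p s2, s = s1 ++ p :: s2 /\ Z = p.1 :|: p.2.
Proof.
rewrite /clusters inE => /orP[->//|]; rewrite inE => /mapP[p hp ->] _.
case/splitPr: hp => s1 s2; by exists s1, p, s2.
Qed.

Lemma admissible_step R s1 p s2 : admissible R (s1 ++ p :: s2) -> disjoint_blocks R ->
  no_2cycle R ->
  let Q := merge_seq R s1 in
  [/\ disjoint_blocks Q, p.1 \in Q, p.2 \in Q & p.1 != p.2] /\ (arc p.1 p.2 /\ ~~ arc p.2 p.1)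
  /\ (p.1 \in clusters R (s1 ++ p :: s2) /\ p.2 \in clusters R (s1 ++ p :: s2)).
Proof.
rewrite admissible_cat => /andP[hv1 hv2] hp hn Q.
have hpQ : disjoint_blocks Q := admissible_disjoint_blocks hv1 hp.
have hnQ : no_2cycle Q := admissible_no_2cycle hv1 hn.
move: hv2; rewrite admissible_cons => /and3P[hq _ _].
have hq' := hq; move: hq' => /and4P[h1 h2 h12 e12].
have ne21 : ~~ arc p.2 p.1.
  apply/negP => e21; have := hnQ _ _ hq; by rewrite qedgeE h1 h2 eq_sym h12 e21.
have sub : Q \subset clusters R (s1 ++ p :: s2) :=
  subset_trans (merge_seq_sub_clusters R s1) (clusters_catl _ _ _).
split => //; split => //; split; exact: (subsetP sub).
Qed.

Lemma card_P0 X : X \in P0 G -> #|X| = 1.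
Proof. by move=> /imsetP[v _ ->]; rewrite cards1. Qed.

Lemma TG_split (t : ltree G) : g_acyclic G -> in_TG t -> forall Z, Z \in t -> 1 < #|Z| ->
  exists Y W, [/\ Y \in t, W \in t & Y :|: W = Z] /\
     [/\ [disjoint Y & W], Y != set0, W != set0 & arc Y W && ~~ arc W Y].
Proof.
move=> hg [s [hs <-]] Z hZ hc.
have hnP : Z \notin P0 G by apply/negP => /card_P0 h; rewrite h in hc.
have [s1 [p [s2 [es ->]]]] := clusters_step hZ hnP.
move: hs; rewrite is_cseqE => /andP[hv _].
move: hv; rewrite es => hv.
have [[hpQ h1 h2 h12] [[e12 n21] [f1 f2]]] :=
  admissible_step hv P0_disjoint_blocks (P0_no_2cycle hg).
exists p.1, p.2; rewrite tree_ofE; split => //; split => //.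
- exact: hpQ.2.
- exact: hpQ.1.
- exact: hpQ.1.
- by rewrite e12.
Qed.

Lemma TG_laminar (t : ltree G) : in_TG t -> forall X Y, X \in t -> Y \in t ->
  nested_or_disjoint X Y.
Proof.
move=> [s [hs <-]]; move: hs; rewrite is_cseqE => /andP[hv _].
exact: (clusters_laminar hv P0_disjoint_blocks).
Qed.

(** * Refining and reordering contraction sequences *)

Lemma q_acyclic_rank R : q_acyclic R -> exists r : sT -> nat, forall X Y, qedge R X Y -> r X < r Y.
Proof.
move=> /forallP h.
exists (fun X => #|[set Z | connect (qedge R) Z X]|) => X Y hXY.
apply: proper_card; apply/properP; split.
  apply/subsetP => Z; rewrite !inE => hZ.
  exact: (connect_trans hZ (connect1 hXY)).
exists Y; first by rewrite inE connect0.
by rewrite inE; move: (h X) => /forallP/(_ Y); rewrite hXY.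
Qed.

Lemma rank_q_acyclic R (r : sT -> nat) : (forall X Y, qedge R X Y -> r X < r Y) -> q_acyclic R.
Proof.
move=> hr; apply/forallP => X; apply/forallP => Y; apply/implyP => hXY.
apply/negP => /connectP[p hp hl].
have := path_rank_le hr hp; rewrite -hl => h.
by have := leq_trans (hr _ _ hXY) h; rewrite ltnn.
Qed.

Lemma sub_block_notin (R : {set sT}) (C X : sT) : disjoint_blocks R -> C \in R -> X \subset C ->
  X != set0 -> X != C -> X \notin R.
Proof.
move=> hp hC hXC hX0 nXC; apply/negP => hX.
have hd := hp.2 _ _ hX hC nXC.
case/set0Pn: hX0 => x hx.
exact: (disjoint_mem2 hd hx (subsetP hXC _ hx)).
Qed.

Definition unmerge (R : {set sT}) (A B : sT) := (R :\ (A :|: B)) :|: [set A; B].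

Lemma in_unmerge R A B Z : (Z \in unmerge R A B) = [|| (Z != A :|: B) && (Z \in R),
  Z == A | Z == B].
Proof. by rewrite /unmerge !inE. Qed.

Lemma unmerge_q_acyclic R A B : disjoint_blocks R -> A :|: B \in R -> A != set0 -> B != set0 ->
  [disjoint A & B] -> ~~ arc B A -> q_acyclic R -> q_acyclic (unmerge R A B).
Proof.
move=> hp hC hA0 hB0 hd nBA /q_acyclic_rank[r hr].
set C := A :|: B in hC *.
have nAC : A != C := setU_neq_l hB0 hd.
have nBC : B != C by rewrite /C setUC; apply: setU_neq_l hA0 _; rewrite disjoint_sym.
have nAB : A != B := disjoint_neq hA0 hd.
have AnR : A \notin R := sub_block_notin hp hC (subsetUl _ _) hA0 nAC.
have BnR : B \notin R := sub_block_notin hp hC (subsetUr _ _) hB0 nBC.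
(* A and B inherit the rank of A :|: B, with A strictly below B: no arc goes from B to A. *)
pose r' := fun Z => if Z == A then 2 * r C else if Z == B then 2 * r C + 1 else 2 * r Z.
apply: (@rank_q_acyclic _ r') => X Y.
rewrite qedgeE !in_unmerge => /and4P[hX hY nXY eXY].
have eAC : forall Y, arc A Y -> arc C Y by move=> Z; apply: arcS (subsetUl _ _) (subxx _).
have eBC : forall Y, arc B Y -> arc C Y by move=> Z; apply: arcS (subsetUr _ _) (subxx _).
have eCA : forall Y, arc Y A -> arc Y C by move=> Z; apply: arcS (subxx _) (subsetUl _ _).
have eCB : forall Y, arc Y B -> arc Y C by move=> Z; apply: arcS (subxx _) (subsetUr _ _).
have gen : forall Z, Z \in R -> (Z == A) = false /\ (Z == B) = false.
  by move=> Z hZ; split; apply/negP => /eqP e; [rewrite -e hZ in AnR | rewrite -e hZ in BnR].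
have nBA' : (B == A) = false by rewrite eq_sym (negbTE nAB).
rewrite /r'.
case/or3P: hX => [/andP[nXC hXR]|/eqP eXA|/eqP eXB];
case/or3P: hY => [/andP[nYC hYR]|/eqP eYA|/eqP eYB].
- have [n1 n2] := gen _ hXR; have [n3 n4] := gen _ hYR; rewrite n1 n2 n3 n4.
  have : r X < r Y by apply: hr; rewrite qedgeE hXR hYR nXY eXY.
  move=> hh; clear -hh; lia.
- have [n1 n2] := gen _ hXR; rewrite n1 n2 eYA eqxx.
  have : r X < r C by apply: hr; rewrite qedgeE hXR hC nXC eCA // -eYA.
  move=> hh; clear -hh; lia.
- have [n1 n2] := gen _ hXR; rewrite n1 n2 eYB eqxx nBA'.
  have : r X < r C by apply: hr; rewrite qedgeE hXR hC nXC eCB // -eYB.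
  move=> hh; clear -hh; lia.
- have [n3 n4] := gen _ hYR; rewrite eXA eqxx n3 n4.
  have : r C < r Y by apply: hr; rewrite qedgeE hC hYR eq_sym nYC eAC // -eXA.
  move=> hh; clear -hh; lia.
- by rewrite eXA eYA eqxx in nXY.
- rewrite eXA eYB !eqxx nBA' ?eqxx /=; clear; lia.
- have [n3 n4] := gen _ hYR; rewrite eXB eqxx n3 n4 nBA'.
  have : r C < r Y by apply: hr; rewrite qedgeE hC hYR eq_sym nYC eBC // -eXB.
  move=> hh; clear -hh; lia.
- by rewrite eXB eYA in eXY; rewrite eXY in nBA.
- by rewrite eXB eYB eqxx in nXY.
Qed.

Lemma merge_seq_coarsen (R : {set sT}) s (X : sT) : X \in R -> exists2 Y,
  Y \in merge_seq R s & X \subset Y.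
Proof.
elim: s R X => [|[A B] s IH] R X hX; first by exists X.
rewrite merge_seq_cons /=.
case: (eqVneq X A) => [eXA|nXA]; last case: (eqVneq X B) => [eXB|nXB].
- have hU : A :|: B \in merge R A B by rewrite in_merge eqxx orbT.
  have [Y hY hs] := IH (merge R A B) (A :|: B) hU.
  by exists Y => //; rewrite eXA (subset_trans (subsetUl _ _) hs).
- have hU : A :|: B \in merge R A B by rewrite in_merge eqxx orbT.
  have [Y hY hs] := IH (merge R A B) (A :|: B) hU.
  by exists Y => //; rewrite eXB (subset_trans (subsetUr _ _) hs).
by apply: IH; rewrite in_merge nXA nXB hX.
Qed.

Lemma merged_subblock_notin (R : {set sT}) (X Y : sT) s : disjoint_blocks R -> X \in R ->
  Y \in R -> X != Y -> admissible (merge R X Y) s ->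
  forall W, W \in R -> W \subset X :|: Y -> W != X :|: Y -> W \notin merge_seq (merge R X Y) s.
Proof.
move=> hp hX hY nXY hv W hW hWs nWU.
have hU : X :|: Y \in merge R X Y by rewrite in_merge eqxx orbT.
have [Z hZ hsZ] := merge_seq_coarsen s hU.
have hpr : disjoint_blocks (merge_seq (merge R X Y) s) :=
  admissible_disjoint_blocks hv (merge_disjoint_blocks hp hX hY nXY).
apply/negP => hWr.
case: (eqVneq W Z) => [eWZ|nWZ].
  by move: nWU; rewrite eqEsubset hWs eWZ hsZ.
have hd := hpr.2 _ _ hWr hZ nWZ.
case/set0Pn: (hp.1 _ hW) => w hw.
exact: (disjoint_mem2 hd hw (subsetP hsZ _ (subsetP hWs _ hw))).
Qed.

Lemma merge_unmergeC (R : {set sT}) (A B X Y : sT) : A \notin R -> B \notin R -> X \in R ->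
  Y \in R ->
  X :|: Y != A :|: B -> merge (unmerge R A B) X Y = unmerge (merge R X Y) A B.
Proof.
move=> AnR BnR hX hY nUC.
have neqR Z W : Z \notin R -> W \in R -> (Z == W) = false.
  by move=> ZnR hW; apply: contraNF ZnR => /eqP ->.
apply/setP => Z; rewrite in_merge !in_unmerge in_merge.
have [->|nZA] := eqVneq Z A.
  by rewrite (neqR _ _ AnR hX) (neqR _ _ AnR hY) (negbTE AnR) /= !andbF !orbT.
have [->|nZB] := eqVneq Z B.
  by rewrite (neqR _ _ BnR hX) (neqR _ _ BnR hY) (negbTE BnR) /= !andbF !orbT.
rewrite !orbF; have [->|nZU] := eqVneq Z (X :|: Y); first by rewrite nUC !orbT.
by rewrite !orbF; case: (Z != Y); case: (Z != X); case: (Z != A :|: B); case: (Z \in R).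
Qed.

(* The block A :|: B is never merged by s, so s also runs on the graph where A and B are apart. *)
Lemma postpone_merge R s A B : admissible R s -> disjoint_blocks R ->
  A :|: B \in R -> A :|: B \in merge_seq R s ->
  A != set0 -> B != set0 -> [disjoint A & B] -> ~~ arc B A ->
  admissible (unmerge R A B) s /\ merge_seq (unmerge R A B) s = unmerge (merge_seq R s) A B.
Proof.
elim: s R => [|[X Y] s IH] R //.
move=> hv hp hC hCr hA0 hB0 hd nBA; rewrite merge_seq_cons /= in hCr.
move: hv; rewrite admissible_cons /= => /and3P[hq hacy hv].
have /and4P[hX hY nXY eXY] := hq.
set C := A :|: B in hC hCr *.
have hdXY : [disjoint X & Y] := hp.2 _ _ hX hY nXY.
have hpM := merge_disjoint_blocks hp hX hY nXY.
have nXC : X != C.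
  apply: contraTneq hCr => eXC; rewrite -eXC.
  apply: merged_subblock_notin => //; first exact: subsetUl.
  exact: setU_neq_l (hp.1 _ hY) hdXY.
have nYC : Y != C.
  apply: contraTneq hCr => eYC; rewrite -eYC.
  apply: merged_subblock_notin => //; first exact: subsetUr.
  by rewrite setUC; apply: setU_neq_l (hp.1 _ hX) _; rewrite disjoint_sym.
have hCM : C \in merge R X Y by rewrite in_merge eq_sym nYC eq_sym nXC hC.
have AnR : A \notin R.
  exact: sub_block_notin hp hC (subsetUl _ _) hA0 (setU_neq_l hB0 hd).
have BnR : B \notin R.
  apply: sub_block_notin hp hC (subsetUr _ _) hB0 _.
  by rewrite /C setUC; apply: setU_neq_l hA0 _; rewrite disjoint_sym.
have nUC : X :|: Y != C.
  apply: contraTneq (hX) => eU.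
  by apply: sub_block_notin hp hC _ (hp.1 _ hX) nXC; rewrite -eU subsetUl.
have [IH1 IH2] := IH _ hv hpM hCM hCr hA0 hB0 hd nBA.
rewrite /= merge_unmergeC // IH1 IH2 andbT; split => //.
apply/andP; split; first by rewrite qedgeE !in_unmerge nXC nYC hX hY nXY.
exact: unmerge_q_acyclic hpM hCM hA0 hB0 hd nBA hacy.
Qed.

Lemma unmergeK (S : {set sT}) (A B : sT) : disjoint_blocks S -> A \in S -> B \in S -> A != B ->
  unmerge (merge S A B) A B = S.
Proof.
move=> hp hA hB nAB.
have dAB := hp.2 _ _ hA hB nAB.
have CnS : A :|: B \notin S.
  apply/negP => hC.
  have nAC : A != A :|: B := setU_neq_l (hp.1 _ hB) dAB.
  have dd := hp.2 _ _ hA hC nAC.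
  case/set0Pn: (hp.1 _ hA) => a ha.
  by apply: (disjoint_mem2 dd ha); rewrite inE ha.
apply/setP => Z; rewrite in_unmerge in_merge.
case: (eqVneq Z A) => [->|nZA]; first by rewrite hA !orbT.
case: (eqVneq Z B) => [->|nZB]; first by rewrite hB !orbT.
rewrite /= !orbF.
case: (eqVneq Z (A :|: B)) => [->|nZC] /=; first by rewrite (negbTE CnS).
by rewrite orbF.
Qed.

Lemma merge_pair (K : {set sT}) (U W : sT) : U \notin K -> W \notin K ->
  merge (K :|: [set U; W]) U W = K :|: [set U :|: W].
Proof.
move=> hU hW; apply/setP => Z; rewrite in_merge !inE.
case: (eqVneq Z U) => [->|nU]; first by rewrite (negbTE hU) /= andbF.
case: (eqVneq Z W) => [->|nW]; first by rewrite (negbTE hW) /=.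
by rewrite /= !orbF.
Qed.

Lemma merge_triple (K : {set sT}) (X Y R0 : sT) : X \notin K -> Y \notin K -> X != R0 -> Y != R0 ->
  merge (K :|: [set X; Y; R0]) X Y = K :|: [set X :|: Y; R0].
Proof.
move=> hX hY nX nY; apply/setP => Z; rewrite in_merge !inE.
case: (eqVneq Z X) => [->|nZX]; first by rewrite (negbTE hX) (negbTE nX) /= ?andbF /= ?orbF.
case: (eqVneq Z Y) => [->|nZY]; first by rewrite (negbTE hY) (negbTE nY) /= ?andbF /= ?orbF.
rewrite /=; by case: (Z \in K); case: (Z == X :|: Y); case: (Z == R0).
Qed.

Lemma unmerge_single (K : {set sT}) (P x y : sT) : P \notin K -> x :|: y = P ->
  unmerge (K :|: [set P]) x y = K :|: [set x; y].
Proof.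
move=> hP e; apply/setP => Z; rewrite in_unmerge e !inE.
case: (eqVneq Z P) => [->|nZ]; first by rewrite (negbTE hP).
by rewrite /=; case: (Z \in K).
Qed.

Lemma two_merges_admissible (K : {set sT}) (X Y R0 x2 y2 P : sT) :
  x2 :|: y2 = P ->
  disjoint_blocks (K :|: [set P]) -> q_acyclic (K :|: [set P]) -> P \notin K -> X \notin K ->
    Y \notin K ->
  X != R0 -> Y != R0 -> X != Y -> arc X Y ->
  [set X :|: Y; R0] = [set x2; y2] -> x2 != set0 -> y2 != set0 -> [disjoint x2 & y2] ->
  arc x2 y2 -> ~~ arc y2 x2 ->
  admissible (K :|: [set X; Y; R0]) [:: (X, Y); (x2, y2)] /\
  merge_seq (K :|: [set X; Y; R0]) [:: (X, Y); (x2, y2)] = K :|: [set P].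
Proof.
move=> eP hp hacy hPK hX hY nX nY nXY eXY e2 hx0 hy0 dxy exy nyx.
have hPS : P \in K :|: [set P] by rewrite !inE eqxx orbT.
have nxP : x2 != P by rewrite -eP; apply: setU_neq_l.
have nyP : y2 != P by rewrite -eP setUC; apply: setU_neq_l hx0 _; rewrite disjoint_sym.
have sx : x2 \subset P by rewrite -eP subsetUl.
have sy : y2 \subset P by rewrite -eP subsetUr.
have xnS : x2 \notin K :|: [set P] := sub_block_notin hp hPS sx hx0 nxP.
have ynS : y2 \notin K :|: [set P] := sub_block_notin hp hPS sy hy0 nyP.
have xnK : x2 \notin K by move: xnS; rewrite !inE negb_or => /andP[].
have ynK : y2 \notin K by move: ynS; rewrite !inE negb_or => /andP[].
have nxy : x2 != y2 := disjoint_neq hx0 dxy.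
have e1 : merge (K :|: [set X; Y; R0]) X Y = K :|: [set x2; y2] by rewrite merge_triple // e2.
have e3 : merge (K :|: [set x2; y2]) x2 y2 = K :|: [set P] by rewrite merge_pair // eP.
rewrite /merge_seq /=.
rewrite e1 e3 hacy andbT; split => //.
apply/and3P; split.
- by rewrite qedgeE nXY eXY !inE !eqxx /= !orbT.
- by rewrite -(unmerge_single hPK eP); apply: unmerge_q_acyclic => //; rewrite eP.
- by rewrite qedgeE nxy exy !inE !eqxx /= !orbT.
Qed.

Section ReorderTriple.
Variables (K : {set sT}) (A B D P : sT).
Hypotheses (eP : P = A :|: B :|: D) (hp : disjoint_blocks (K :|: [set P])).
Hypotheses (hacy : q_acyclic (K :|: [set P])).
Hypotheses (PnK : P \notin K) (AnK : A \notin K) (BnK : B \notin K) (DnK : D \notin K).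
Hypotheses (hA0 : A != set0) (hB0 : B != set0).
Hypotheses (dAB : [disjoint A & B]) (dAD : [disjoint A & D]) (dBD : [disjoint B & D]).
Hypotheses (eAB : arc A B) (nBA : ~~ arc B A).

Lemma triple_layout (X Y R0 : sT) :
  (forall Z, [|| Z == X, Z == Y | Z == R0] = [|| Z == A, Z == B | Z == D]) ->
  K :|: [set A; B; D] = K :|: [set X; Y; R0].
Proof. by move=> e; apply/setP => Z; rewrite !inE -!orbA e. Qed.

Lemma triple_neq : [/\ A != B, A != D & B != D] /\ [/\ B != A, D != A & D != B].
Proof.
have [neAB neAD neBD] : [/\ A != B, A != D & B != D] by split; apply: disjoint_neq.
by split; rewrite // ![D == _]eq_sym eq_sym.
Qed.

Lemma reorder_triple_out : arc (A :|: B) D -> ~~ arc D (A :|: B) -> exists N x y,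
  [/\ N = A \/ N = B, x.1 :|: x.2 = N :|: D, y.1 :|: y.2 = P,
    admissible (K :|: [set A; B; D]) [:: x; y]
    & merge_seq (K :|: [set A; B; D]) [:: x; y] = K :|: [set P]].
Proof.
rewrite arcUl arcUr negb_or => eCD /andP[nDA nDB].
have [[neAB neAD neBD] [neBA neDA neDB]] := triple_neq.
have hAD0 : A :|: D != set0 by rewrite setU_eq0 negb_and hA0.
have hBD0 : B :|: D != set0 by rewrite setU_eq0 negb_and hB0.
case: (boolP (arc B D)) => hBD.
- have eU : A :|: (B :|: D) = P by rewrite eP setUA.
  have e2 : [set B :|: D; A] = [set A; B :|: D] by apply/setP => Z; rewrite !inE orbC.
  have f1 : arc A (B :|: D) by rewrite arcUr eAB.
  have f2 : ~~ arc (B :|: D) A by rewrite arcUl negb_or nBA nDA.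
  have [hv hr] := two_merges_admissible eU hp hacy PnK BnK DnK neBA neDA neBD hBD e2
    hA0 hBD0 (disjoint_setU dAB dAD) f1 f2.
  exists B, (B, D), (A, B :|: D); rewrite (@triple_layout B D A) ?eU; last first.
    by move=> Z; case: (Z == A); case: (Z == B); case: (Z == D).
  by split => //; right.
- have hAD : arc A D by move: eCD; rewrite (negbTE hBD) orbF.
  have eU : A :|: D :|: B = P by rewrite eP setUAC.
  have f0 : [disjoint A :|: D & B] by rewrite disjoint_sym disjoint_setU // disjoint_sym.
  have f1 : arc (A :|: D) B by rewrite arcUl eAB.
  have f2 : ~~ arc B (A :|: D) by rewrite arcUr negb_or nBA hBD.
  have [hv hr] := two_merges_admissible eU hp hacy PnK AnK DnK neAB neDB neAD hAD
    (erefl _) hAD0 hB0 f0 f1 f2.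
  exists A, (A, D), (A :|: D, B); rewrite (@triple_layout A D B) ?eU; last first.
    by move=> Z; case: (Z == A); case: (Z == B); case: (Z == D).
  by split => //; left.
Qed.

Lemma reorder_triple_in : arc D (A :|: B) -> ~~ arc (A :|: B) D -> exists N x y,
  [/\ N = A \/ N = B, x.1 :|: x.2 = N :|: D, y.1 :|: y.2 = P,
    admissible (K :|: [set A; B; D]) [:: x; y]
    & merge_seq (K :|: [set A; B; D]) [:: x; y] = K :|: [set P]].
Proof.
rewrite arcUl arcUr negb_or => eCD /andP[nAD nBD].
have [[neAB neAD neBD] [neBA neDA neDB]] := triple_neq.
have hDA0 : D :|: A != set0 by rewrite setUC setU_eq0 negb_and hA0.
have hDB0 : D :|: B != set0 by rewrite setUC setU_eq0 negb_and hB0.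
have dDA : [disjoint D & A] by rewrite disjoint_sym.
have dDB : [disjoint D & B] by rewrite disjoint_sym.
case: (boolP (arc D A)) => hDA.
- have eU : D :|: A :|: B = P by rewrite eP -setUA setUC.
  have f0 : [disjoint D :|: A & B] by rewrite disjoint_sym disjoint_setU // disjoint_sym.
  have f1 : arc (D :|: A) B by rewrite arcUl eAB orbT.
  have f2 : ~~ arc B (D :|: A) by rewrite arcUr negb_or nBD nBA.
  have [hv hr] := two_merges_admissible eU hp hacy PnK DnK AnK neDB neAB neDA hDA
    (erefl _) hDA0 hB0 f0 f1 f2.
  exists A, (D, A), (D :|: A, B); rewrite (@triple_layout D A B) ?eU; last first.
    by move=> Z; case: (Z == A); case: (Z == B); case: (Z == D).
  by split; [left | exact: setUC | | |].
- have hDB : arc D B by move: eCD; rewrite (negbTE hDA).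
  have eU : A :|: (D :|: B) = P by rewrite eP -setUA [D :|: B]setUC.
  have e2 : [set D :|: B; A] = [set A; D :|: B] by apply/setP => Z; rewrite !inE orbC.
  have f1 : arc A (D :|: B) by rewrite arcUr eAB orbT.
  have f2 : ~~ arc (D :|: B) A by rewrite arcUl negb_or hDA nBA.
  have [hv hr] := two_merges_admissible eU hp hacy PnK DnK BnK neDA neBA neDB hDB e2
    hA0 hDB0 (disjoint_setU dAD dAB) f1 f2.
  exists B, (D, B), (A, D :|: B); rewrite (@triple_layout D B A) ?eU; last first.
    by move=> Z; case: (Z == A); case: (Z == B); case: (Z == D).
  by split; [right | exact: setUC | | |].
Qed.

Lemma reorder_triple : one_way (A :|: B) D -> exists N x y, [/\ N = A \/ N = B,
  x.1 :|: x.2 = N :|: D, y.1 :|: y.2 = P,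
    admissible (K :|: [set A; B; D]) [:: x; y]
    & merge_seq (K :|: [set A; B; D]) [:: x; y] = K :|: [set P]].
Proof.
by case/orP => /andP[]; [exact: reorder_triple_out | exact: reorder_triple_in].
Qed.

End ReorderTriple.

Lemma reorder_merges (Q : {set sT}) (A B D : sT) (p : sT * sT) :
  disjoint_blocks Q -> A :|: B \in Q -> D \in Q -> A :|: B != D ->
  A != set0 -> B != set0 -> [disjoint A & B] -> arc A B -> ~~ arc B A ->
  (p = (A :|: B, D) \/ p = (D, A :|: B)) -> arc p.1 p.2 -> ~~ arc p.2 p.1 ->
  q_acyclic (merge Q p.1 p.2) ->
  exists N x y, [/\ N = A \/ N = B, x.1 :|: x.2 = N :|: D, y.1 :|: y.2 = p.1 :|: p.2,
    admissible (unmerge Q A B) [:: x; y] & merge_seq (unmerge Q A B) [:: x; y] = merge Q p.1 p.2].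
Proof.
move=> hp hC hD nCD hA0 hB0 dAB eAB nBA hpc e12 n21 hacy.
set C := A :|: B in hC nCD hpc.
have dCD : [disjoint C & D] := hp.2 _ _ hC hD nCD.
have AnQ : A \notin Q := sub_block_notin hp hC (subsetUl _ _) hA0 (setU_neq_l hB0 dAB).
have BnQ : B \notin Q.
  apply: sub_block_notin hp hC (subsetUr _ _) hB0 _.
  by rewrite /C setUC; apply: setU_neq_l hA0 _; rewrite disjoint_sym.
pose K := Q :\ C :\ D.
have eP : p.1 :|: p.2 = A :|: B :|: D by case: hpc => -> //=; rewrite setUC.
have eT : unmerge Q A B = K :|: [set A; B; D].
  apply/setP => Z; rewrite in_unmerge !inE.
  have [->|nZD] := eqVneq Z D; first by rewrite hD eq_sym nCD !orbT.
  by rewrite /= !orbF.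
have eM : merge Q p.1 p.2 = K :|: [set p.1 :|: p.2].
  apply/setP => Z; rewrite in_merge !inE.
  by case: hpc => -> //=; case: (Z != C); case: (Z != D).
have PnK : p.1 :|: p.2 \notin K.
  rewrite !inE; apply/negP => /and3P[_ nPC hPQ].
  case/set0Pn: hA0 => a ha.
  apply: (disjoint_mem2 (hp.2 _ _ hPQ hC nPC) (x := a)); last by rewrite inE ha.
  by rewrite eP !inE ha.
have ud : one_way (A :|: B) D.
  by case: hpc e12 n21 => -> /= e12 n21; rewrite /one_way e12 n21 ?orbT.
have hpM : disjoint_blocks (merge Q p.1 p.2).
  by case: hpc => -> /=; apply: merge_disjoint_blocks; rewrite // eq_sym.
rewrite eT eM in hacy hpM *.
apply: reorder_triple eP hpM hacy PnK _ _ _ hA0 hB0 dAB _ _ eAB nBA ud;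
  rewrite ?inE ?(negbTE AnQ) ?(negbTE BnQ) ?eqxx ?andbF //.
- exact: disjointWl (subsetUl _ _) dCD.
- exact: disjointWl (subsetUr _ _) dCD.
Qed.

(** * Trees with the same contraction *)

Lemma below_parent_blocks (t : ltree G) (A B D P C : sT) :
  (forall X Y, X \in t -> Y \in t -> nested_or_disjoint X Y) ->
  C = A :|: B -> P = C :|: D -> A != set0 -> B != set0 -> [disjoint A & B] ->
  [forall X in t, ~~ ((C \proper X) && (X \proper P))] -> A \in t -> B \in t -> C \in t ->
  forall Z, Z \in t -> Z \proper P -> Z != C -> [|| Z \subset A, Z \subset B | Z \subset D].
Proof.
move=> lamt eC eP hA0 hB0 dAB /forall_inP hbet hA hB hC Z hZ hZP nZC.
subst C P.
case/or3P: (lamt Z _ hZ hC) => [hZC|hCZ|dZC].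
- case/or3P: (lamt Z A hZ hA) => [->//|hAZ|dZA].
  + case/or3P: (lamt Z B hZ hB) => [hZB|hBZ|dZB].
    * case/set0Pn: hA0 => a ha; case: (disjoint_mem2 dAB ha (subsetP hZB _ (subsetP hAZ _ ha))).
    * by move: nZC; rewrite eqEsubset hZC /= subUset hAZ hBZ.
    * by rewrite (subsetU_disjointr hZC dZB).
  + by rewrite (subsetU_disjointl hZC dZA) /= ?orbT.
- have : A :|: B \proper Z by rewrite properEneq eq_sym nZC.
  by move=> hp; move: (hbet Z hZ); rewrite hp hZP.
- by rewrite (subsetU_disjointl (proper_sub hZP) dZC) /= ?orbT.
Qed.

Lemma twin_child_one_way (t t2 : ltree G) (N M D C2 : sT) :
  g_acyclic G -> in_TG t2 -> N != set0 -> M != set0 -> D != set0 ->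
  [disjoint N & M] -> [disjoint N & D] -> [disjoint M & D] ->
  (forall Z, Z \in t -> Z \proper N :|: M :|: D -> Z != N :|: M ->
     [|| Z \subset N, Z \subset M | Z \subset D]) ->
  (forall Z, (Z \in t2) = (Z == C2) || (Z \in t :\ (N :|: M))) ->
  C2 = N :|: D -> C2 \in t2 -> 1 < #|C2| -> one_way N D.
Proof.
move=> hg Ht2 hN0 hM0 hD0 dNM dND dMD below memb eC2 hC2 hc2.
have [U [W [[hU hW eUW] [dUW U0 W0 /andP[aUW nWU]]]]] := TG_split hg Ht2 hC2 hc2.
have piece (Z : sT) : Z \in t2 -> Z != C2 -> Z != set0 -> Z \subset C2 ->
    Z \subset N \/ Z \subset D.
  move=> hZ nZC2 Z0 sZ.
  move: hZ; rewrite memb (negbTE nZC2) !inE => /andP[nZC hZt].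
  have pZ : Z \proper N :|: M :|: D by rewrite (sub_proper_trans sZ) // eC2 properU_mid.
  case/or3P: (below Z hZt pZ nZC) => [->|hZM|->]; [by left | | by right].
  case/set0Pn: Z0 => z hz; have := subsetP sZ z hz; rewrite eC2 inE => /orP[hn|hd].
  - by case: (disjoint_mem2 dNM hn (subsetP hZM _ hz)).
  - by case: (disjoint_mem2 dMD (subsetP hZM _ hz) hd).
have nUC2 : U != C2 by rewrite -eUW setU_neq_l.
have nWC2 : W != C2 by rewrite -eUW setUC setU_neq_l // disjoint_sym.
have dDN : [disjoint D & N] by rewrite disjoint_sym.
have eUW' : U :|: W = D :|: N by rewrite eUW eC2 setUC.
have sU : U \subset C2 by rewrite -eUW subsetUl.
have sW : W \subset C2 by rewrite -eUW subsetUr.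
rewrite eC2 in eUW.
case: (piece U hU nUC2 U0 sU) => hUp; case: (piece W hW nWC2 W0 sW) => hWp.
- by case: (setU_sub_disjointF eUW hUp hWp hD0 dND).
- have [eU eW] := setU_subset_eq eUW hUp hWp dND.
  by rewrite /one_way -eU -eW aUW nWU.
- have [eU eW] := setU_subset_eq eUW' hUp hWp dDN.
  by rewrite /one_way -eU -eW aUW nWU orbT.
- by case: (setU_sub_disjointF eUW' hUp hWp hN0 dDN).
Qed.

Lemma twin_parent_eq (t t2 : ltree G) (N M D C2 P2 : sT) :
  in_TG t2 -> N != set0 -> M != set0 -> D != set0 ->
  [disjoint N & M] -> [disjoint N & D] -> [disjoint M & D] ->
  (forall Z, Z \in t -> Z \proper N :|: M :|: D -> Z != N :|: M ->
     [|| Z \subset N, Z \subset M | Z \subset D]) ->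
  (forall Z, (Z \in t2) = (Z == C2) || (Z \in t :\ (N :|: M))) ->
  C2 = N :|: D -> tedge t2 P2 C2 -> N :|: M :|: D \in t2 -> P2 = N :|: M :|: D.
Proof.
move=> Ht2 hN0 hM0 hD0 dNM dND dMD below memb eC2 /and4P[hP2 hC2 pC2 /forall_inP hbet] hPt2.
have C2P : C2 \proper N :|: M :|: D by rewrite eC2 properU_mid.
set P := N :|: M :|: D in below hPt2 C2P *.
case/or3P: (TG_laminar Ht2 hPt2 hP2) => [sPP2|sP2P|dPP2].
- have [//|nPP2] := eqVneq P2 P.
  have pPP2 : P \proper P2 by rewrite properEneq eq_sym nPP2.
  by move: (hbet P hPt2); rewrite pPP2 C2P.
- have [//|nP2P] := eqVneq P2 P.
  have pP2 : P2 \proper P by rewrite properEneq nP2P.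
  have nP2C2 : P2 != C2 by rewrite eq_sym proper_neq.
  move: hP2; rewrite memb (negbTE nP2C2) !inE => /andP[nP2C hP2t].
  have sC2 : N :|: D \subset P2 by rewrite -eC2 proper_sub.
  by case: (straddle_blocksF hN0 hD0 dNM dND sC2 (below P2 hP2t pP2 nP2C)).
- case/set0Pn: hN0 => n hn.
  have hnC2 : n \in C2 by rewrite eC2 inE hn.
  by case: (disjoint_mem2 dPP2 (subsetP (proper_sub C2P) _ hnC2) (subsetP (proper_sub pC2) _ hnC2)).
Qed.

Lemma twin_sibling_case (t t2 : ltree G) (N M D C2 P2 : sT) :
  g_acyclic G -> in_TG t2 -> N != set0 -> M != set0 -> D != set0 ->
  [disjoint N & M] -> [disjoint N & D] -> [disjoint M & D] ->
  (forall Z, Z \in t -> Z \proper N :|: M :|: D -> Z != N :|: M ->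
     [|| Z \subset N, Z \subset M | Z \subset D]) ->
  (forall Z, (Z \in t2) = (Z == C2) || (Z \in t :\ (N :|: M))) ->
  internal_edge t2 P2 C2 -> N :|: M :|: D \in t2 ->
  C2 :|: M = N :|: M :|: D -> [disjoint C2 & M] -> one_way C2 M ->
  [/\ C2 = N :|: D, P2 = N :|: M :|: D & one_way N D && one_way (N :|: D) M].
Proof.
move=> hg Ht2 hN0 hM0 hD0 dNM dND dMD below memb /andP[/andP[hte hc2] _] hPt2 eC2M dC2M ud.
have eC2 : C2 = N :|: D.
  apply: (setU_cancell (X := M)) => //; first by rewrite eC2M setUAC setUC.
  by rewrite disjoint_setU // disjoint_sym.
have /and4P[_ hC2 _ _] := hte.
split => //; first exact: twin_parent_eq Ht2 hN0 hM0 hD0 dNM dND dMD below memb eC2 hte hPt2.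
by rewrite -eC2 ud (twin_child_one_way hg Ht2 hN0 hM0 hD0 dNM dND dMD below memb eC2 hC2 hc2).
Qed.

Lemma edge_twin_members (t t2 : ltree G) C C2 :
  C \in t -> t2 <> t -> C2 \in t2 -> contract t C = contract t2 C2 ->
  C2 \notin t /\ forall Z, (Z \in t2) = (Z == C2) || (Z \in t :\ C).
Proof.
move=> hC nt hC2 Hcon; rewrite /contract in Hcon.
have memb Z : (Z \in t2) = (Z == C2) || (Z \in t :\ C).
  by case: (eqVneq Z C2) => [->|n]; [rewrite hC2 | rewrite Hcon !inE n].
split=> //; apply/negP => hC2t; case: (eqVneq C2 C) => [e|ne].
  apply: nt; apply/setP => Z; rewrite memb !inE -e.
  by case: (eqVneq Z C2) => [->|].
have : C2 \in t :\ C by rewrite !inE ne hC2t.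
by rewrite Hcon !inE eqxx.
Qed.

Lemma laminar_sibling_maximal (t : ltree G) (Y W M P : sT) :
  (forall X Y, X \in t -> Y \in t -> nested_or_disjoint X Y) ->
  Y \in t -> M \in t -> Y :|: W = P -> [disjoint Y & W] -> W != set0 ->
  W \subset M -> M \proper P -> W = M.
Proof.
move=> lamt hY hM eYW dYW W0 sWM pMP; apply/eqP; rewrite eqEsubset sWM /=.
case/or3P: (lamt _ _ hY hM) => [sYM|sMY|dYM].
- by move: pMP; rewrite properE -eYW subUset sYM sWM andbF.
- case/set0Pn: W0 => w hw.
  by case: (disjoint_mem2 dYW (subsetP sMY _ (subsetP sWM _ hw)) hw).
- apply: (subsetU_disjointl (X := Y)); last by rewrite disjoint_sym.
  by rewrite eYW proper_sub.
Qed.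

Lemma twin_parent_split (t t2 : ltree G) (A B D C2 : sT) :
  g_acyclic G -> in_TG t2 -> A != set0 -> B != set0 -> D != set0 ->
  [disjoint A & B] -> [disjoint A & D] -> [disjoint B & D] ->
  (forall Z, Z \in t -> Z \proper A :|: B :|: D -> Z != A :|: B ->
     [|| Z \subset A, Z \subset B | Z \subset D]) ->
  (forall Z, (Z \in t2) = (Z == C2) || (Z \in t :\ (A :|: B))) ->
  A :|: B :|: D \in t2 -> 1 < #|A :|: B :|: D| ->
  exists2 W, W \in t2 & [/\ C2 :|: W = A :|: B :|: D, [disjoint C2 & W], W != set0
    & one_way C2 W].
Proof.
move=> hg Ht2 hA0 hB0 hD0 dAB dAD dBD below memb hPt2 hPc.
have [Y [W [[hY hW eYW] [dYW Y0 W0 /andP[aYW nWY]]]]] := TG_split hg Ht2 hPt2 hPc.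
have udYW : one_way Y W by rewrite /one_way aYW nWY.
have [eY|nY] := eqVneq Y C2; first by exists W; rewrite -?eY.
have [eW|nW] := eqVneq W C2.
  by exists Y; rewrite -?eW 1?setUC 1?disjoint_sym 1?one_wayC.
have inner Z : Z \in t2 -> Z != C2 -> Z \proper A :|: B :|: D ->
    [|| Z \subset A, Z \subset B | Z \subset D].
  by move=> hZ nZ pZ; move: hZ; rewrite memb (negbTE nZ) !inE => /andP[nZC hZt]; apply: below.
have YP : Y \proper A :|: B :|: D by rewrite -eYW; apply: properU_disjoint.
have WP : W \proper A :|: B :|: D.
  by rewrite -eYW setUC; apply: properU_disjoint => //; rewrite disjoint_sym.
by case: (three_blocks_no_two hA0 hB0 hD0 dAB dAD dBD eYW (inner Y hY nY YP) (inner W hW nW WP)).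
Qed.

Lemma edge_twin_shape (t t2 : ltree G) (A B D P C C2 P2 : sT) :
  g_acyclic G -> in_TG t -> in_TG t2 -> t2 <> t ->
  C = A :|: B -> P = C :|: D -> A != set0 -> B != set0 -> D != set0 ->
  [disjoint A & B] -> [disjoint A & D] -> [disjoint B & D] ->
  A \in t -> B \in t -> C \in t -> D \in t -> P \in t -> 1 < #|P| ->
  [forall X in t, ~~ ((C \proper X) && (X \proper P))] ->
  internal_edge t2 P2 C2 -> contract t C = contract t2 C2 ->
  exists N M, [/\ (N = A /\ M = B) \/ (N = B /\ M = A), C2 = N :|: D, P2 = P,
    (forall Z, (Z \in t2) = (Z == C2) || (Z \in t :\ C)) & one_way N D && one_way (N :|: D) M].
Proof.
move=> hg Ht Ht2 nt eC eP hA0 hB0 hD0 dAB dAD dBD hA hB hC hD hP hPc hbet He2 Hcon.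
have /andP[/andP[/and4P[hP2 hC2 _ _] hc2] _] := He2.
have C20 : C2 != set0 by apply: contraTneq hc2 => ->; rewrite cards0.
have [nC2t memb] := edge_twin_members hC nt hC2 Hcon.
have below := below_parent_blocks (TG_laminar Ht) eC eP hA0 hB0 dAB hbet hA hB hC.
subst C P; set C := A :|: B in hC nC2t memb below *.
have dCD : [disjoint C & D] by rewrite disjoint_sym disjoint_setU // disjoint_sym.
have toT2 Z : Z \in t -> Z != C -> Z \in t2 by move=> hZ nZ; rewrite memb !inE nZ hZ orbT.
have hPt2 : C :|: D \in t2.
  by apply: toT2 hP _; rewrite eq_sym proper_neq // properU_disjoint.
have [W hW [eCW dCW W0 udCW]] :=
  twin_parent_split hg Ht2 hA0 hB0 hD0 dAB dAD dBD below memb hPt2 hPc.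
have nWC2 : W != C2 by apply: disjoint_neq W0 _; rewrite disjoint_sym.
move: (hW); rewrite memb (negbTE nWC2) !inE => /andP[nWC hWt].
have WP : W \proper C :|: D.
  by rewrite -eCW setUC properU_disjoint // disjoint_sym.
have fill M0 : M0 \in t -> M0 != C -> M0 \proper C :|: D -> W \subset M0 -> W = M0.
  move=> hM0 nM0 pM0 sWM.
  exact: laminar_sibling_maximal (TG_laminar Ht2) hC2 (toT2 _ hM0 nM0) eCW dCW W0 sWM pM0.
have sub_proper (X : sT) : X \subset C -> X \proper C :|: D.
  by move=> sXC; rewrite (sub_proper_trans sXC (properU_disjoint hD0 dCD)).
case/or3P: (below W hWt WP nWC) => hWp.
- have eWA : W = A.
    by apply: fill; rewrite ?sub_proper ?subsetUl // /C setU_neq_l.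
  subst W; have eBA : B :|: A = C by rewrite /C setUC.
  have belowBA Z : Z \in t -> Z \proper B :|: A :|: D -> Z != B :|: A ->
      [|| Z \subset B, Z \subset A | Z \subset D].
    by rewrite eBA => *; rewrite orbCA below.
  have membBA Z : (Z \in t2) = (Z == C2) || (Z \in t :\ (B :|: A)) by rewrite eBA.
  rewrite -eBA in hPt2; rewrite [A :|: B]setUC in eCW.
  have dBA : [disjoint B & A] by rewrite disjoint_sym.
  have [eC2 eP2 ud] := twin_sibling_case hg Ht2 hB0 hA0 hD0 dBA dBD dAD
    belowBA membBA He2 hPt2 eCW dCW udCW.
  exists B, A; rewrite eP2 eBA; split; [by right | by [] | by [] | by [] | by []].
- have eWB : W = B.
    by apply: fill; rewrite ?sub_proper ?subsetUr // /C setUC setU_neq_l // disjoint_sym.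
  subst W; have [eC2 eP2 ud] := twin_sibling_case hg Ht2 hA0 hB0 hD0 dAB dAD dBD
    below memb He2 hPt2 eCW dCW udCW.
  exists A, B; split; [by left | by [] | by [] | by [] | by []].
- have nDC : D != C by apply: disjoint_neq hD0 _; rewrite disjoint_sym.
  have C0 : C != set0 by rewrite /C setU_eq0 negb_and hA0.
  have DP : D \proper C :|: D by rewrite setUC properU_disjoint // disjoint_sym.
  have eWD : W = D := fill D hD nDC DP hWp.
  subst W; have eC2 : C2 = C.
    by apply: (setU_cancell (X := D)); rewrite ?eCW 1?setUC // disjoint_sym.
  by rewrite eC2 hC in nC2t.
Qed.

Lemma child_of_merge (t : ltree G) (X Y P C : sT) :
  (forall X Y, X \in t -> Y \in t -> nested_or_disjoint X Y) -> X \in t -> Y \in t -> C \in t ->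
  P = X :|: Y -> [disjoint X & Y] -> X != set0 -> Y != set0 -> C \proper P ->
  [forall Z in t, ~~ ((C \proper Z) && (Z \proper P))] -> C = X \/ C = Y.
Proof.
move=> lamt hX hY hC eP dXY X0 Y0 CP /forall_inP hbet.
have XP : X \proper P by rewrite eP; apply: properU_disjoint.
have YP : Y \proper P by rewrite eP setUC; apply: properU_disjoint => //; rewrite disjoint_sym.
have betw : forall Z, Z \in t -> C \subset Z -> Z \proper P -> C = Z.
  move=> Z hZ sCZ pZ; apply/eqP; apply/negP => /negP nCZ.
  have : C \proper Z by rewrite properEneq nCZ.
  by move=> h; move: (hbet Z hZ); rewrite h pZ.
case/or3P: (lamt C X hC hX) => [sCX|sXC|dCX].
- by left; apply: betw.
- case/or3P: (lamt C Y hC hY) => [sCY|sYC|dCY].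
  + case/set0Pn: X0 => x hx; case: (disjoint_mem2 dXY hx (subsetP sCY _ (subsetP sXC _ hx))).
  + have : P \subset C by rewrite eP subUset sXC sYC.
    by move=> h; move: CP; rewrite properE h andbF.
  + left; apply/eqP; rewrite eqEsubset sXC andbT.
    by apply: (subsetU_disjointr (Y := Y)) => //; rewrite -eP (proper_sub CP).
- right; apply: betw => //.
  by apply: (subsetU_disjointl (X := X)) => //; rewrite -eP (proper_sub CP).
Qed.


(** * Existence and uniqueness of the twin tree *)

Lemma internal_edge_cseq (t : ltree G) P C :
  g_acyclic G -> in_TG t -> internal_edge t P C ->
  exists s1 A B s2 D p s3,
    [/\ is_cseq (P0 G) ((s1 ++ (A, B) :: s2) ++ p :: s3),
        tree_of ((s1 ++ (A, B) :: s2) ++ p :: s3) = t,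
        C = A :|: B, P = C :|: D & p = (C, D) \/ p = (D, C)].
Proof.
move=> hg Ht /andP[/andP[/and4P[hP hC pCP hbet] hCc] hPc].
have [s [hs et]] := Ht.
move: hs; rewrite is_cseqE => /andP[hv hfin].
have hPnP0 : P \notin P0 G by apply/negP => /card_P0 h; rewrite h in hPc.
have hPs : P \in clusters (P0 G) s by rewrite -tree_ofE et.
have [sa [[p1 p2] [s3 [es /= eP]]]] := clusters_step hPs hPnP0.
subst s; set Q := merge_seq (P0 G) sa.
have [[hpQ hp1 hp2 hp12] [_ [f1 f2]]] :=
  admissible_step hv P0_disjoint_blocks (P0_no_2cycle hg).
rewrite /= -tree_ofE et in hp1 hp2 hp12 f1 f2.
have [D [hpc eP' hCQ]] : exists D,
    [/\ (p1, p2) = (C, D) \/ (p1, p2) = (D, C), P = C :|: D & C \in Q].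
  have [->|->] := child_of_merge (TG_laminar Ht) f1 f2 hC eP
    (hpQ.2 _ _ hp1 hp2 hp12) (hpQ.1 _ hp1) (hpQ.1 _ hp2) pCP hbet.
  - by exists p2; split => //; left.
  - by exists p1; rewrite eP setUC; split => //; right.
have hCnP0 : C \notin P0 G by apply/negP => /card_P0 h; rewrite h in hCc.
have hCsa : C \in clusters (P0 G) sa := subsetP (merge_seq_sub_clusters _ _) _ hCQ.
have [s1 [[A B] [s2 [esa /= eC]]]] := clusters_step hCsa hCnP0.
subst sa; exists s1, A, B, s2, D, (p1, p2), s3; split => //.
by rewrite is_cseqE hv.
Qed.

Lemma cseq_blocks (t : ltree G) s1 A B s2 D p s3 :
  g_acyclic G -> is_cseq (P0 G) ((s1 ++ (A, B) :: s2) ++ p :: s3) ->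
  tree_of ((s1 ++ (A, B) :: s2) ++ p :: s3) = t ->
  p = (A :|: B, D) \/ p = (D, A :|: B) ->
  [/\ A \in t, B \in t & D \in t]
    /\ [/\ A != set0, B != set0 & D != set0]
    /\ [/\ [disjoint A & B], [disjoint A & D] & [disjoint B & D]]
    /\ one_way A B /\ one_way (A :|: B) D.
Proof.
move=> hg; rewrite is_cseqE => /andP[hv _] et hpc.
have [[hpQ hp1 hp2 hp12] [[e12 n21] [f1 f2]]] :=
  admissible_step hv P0_disjoint_blocks (P0_no_2cycle hg).
rewrite -catA cat_cons in hv et.
have [[hpS hA hB hAB] [[eAB nBA] [fA fB]]] :=
  admissible_step hv P0_disjoint_blocks (P0_no_2cycle hg).
rewrite -tree_ofE et /= in fA fB.
have [hCQ hDQ nCD] : [/\ A :|: B \in merge_seq (P0 G) (s1 ++ (A, B) :: s2),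
    D \in merge_seq (P0 G) (s1 ++ (A, B) :: s2) & A :|: B != D].
  by case: hpc hp1 hp2 hp12 => -> /= ? ? ?; rewrite // eq_sym.
have dCD := hpQ.2 _ _ hCQ hDQ nCD.
split; last split; last split; last split.
- split => //; move: f1 f2; rewrite -catA cat_cons -tree_ofE et.
  by case: hpc => -> /=.
- by split; [exact: hpS.1 | exact: hpS.1 | exact: hpQ.1].
- split; first exact: hpS.2.
  + exact: disjointWl (subsetUl _ _) dCD.
  + exact: disjointWl (subsetUr _ _) dCD.
- by rewrite /one_way eAB nBA.
- by case: hpc e12 n21 => -> /= e12 n21; rewrite /one_way e12 n21 ?orbT.
Qed.

(* Since t / (P, C) is t with the cluster C removed, it does not depend on P. *)
Definition edge_twin (t : ltree G) (C : sT) (t' : ltree G) (P' C' : sT) :=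
  [/\ in_TG t', t' <> t, internal_edge t' P' C' & contract t C = contract t' C'].

Lemma edge_twin_unique (t : ltree G) P C t1 P1 C1 t2 P2 C2 :
  g_acyclic G -> in_TG t -> internal_edge t P C ->
  edge_twin t C t1 P1 C1 -> edge_twin t C t2 P2 C2 -> [/\ t2 = t1, P2 = P1 & C2 = C1].
Proof.
move=> hg Ht He [Ht1 nt1 He1 ec1] [Ht2 nt2 He2 ec2].
have [s1 [A [B [s2 [D [p [s3 [hs et eC eP hpc]]]]]]]] := internal_edge_cseq hg Ht He.
rewrite eC in hpc.
have [[hA hB hD] [[hA0 hB0 hD0] [[dAB dAD dBD] [udAB udCD]]]] := cseq_blocks hg hs et hpc.
move: He => /andP[/andP[/and4P[hP hC _ hbet] _] hPc].
have [N1 [M1 [hNM1 eC1 eP1 memb1 ud1]]] := edge_twin_shape hg Ht Ht1 nt1 eC eP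
  hA0 hB0 hD0 dAB dAD dBD hA hB hC hD hP hPc hbet He1 ec1.
have [N2 [M2 [hNM2 eC2 eP2 memb2 ud2]]] := edge_twin_shape hg Ht Ht2 nt2 eC eP
  hA0 hB0 hD0 dAB dAD dBD hA hB hC hD hP hPc hbet He2 ec2.
have [eN|nN] := eqVneq N1 N2.
  have eC21 : C2 = C1 by rewrite eC2 eC1 eN.
  by split; rewrite // ?eP2 ?eP1 //; apply/setP => Z; rewrite memb2 memb1 eC21.
case/andP: ud1 => u1 u2; case/andP: ud2 => u3 u4.
case: hNM1 hNM2 => [[e1 f1]|[e1 f1]] [[e2 f2]|[e2 f2]]; subst N1 M1 N2 M2.
- by rewrite eqxx in nN.
- by case: (one_way_triangleF udAB udCD u1 u2 u3 u4).
- by case: (one_way_triangleF udAB udCD u3 u4 u1 u2).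
- by rewrite eqxx in nN.
Qed.

Lemma flip_cseq s1 A B s2 D p s3 :
  g_acyclic G -> is_cseq (P0 G) ((s1 ++ (A, B) :: s2) ++ p :: s3) ->
  p = (A :|: B, D) \/ p = (D, A :|: B) ->
  exists N x y, [/\ N = A \/ N = B, x.1 :|: x.2 = N :|: D, y.1 :|: y.2 = p.1 :|: p.2
    & is_cseq (P0 G) (s1 ++ s2 ++ x :: y :: s3)].
Proof.
move=> hg; rewrite is_cseqE => /andP[hv hfin] hpc.
have [[hpQ hp1 hp2 hp12] [[e12 n21] _]] :=
  admissible_step hv P0_disjoint_blocks (P0_no_2cycle hg).
move: hv; rewrite admissible_cat admissible_cons => /andP[hva /and3P[_ hacyp hv3]].
have [[hpS hA hB hAB] [[eAB nBA] _]] :=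
  admissible_step hva P0_disjoint_blocks (P0_no_2cycle hg).
move: hva; rewrite admissible_cat admissible_cons /= => /andP[hv1 /and3P[_ _ hv2]].
set S := merge_seq (P0 G) s1 in hpS hA hB hv2 *.
set Q := merge_seq (P0 G) (s1 ++ (A, B) :: s2) in hpQ hp1 hp2 hp12 hacyp hv3 hfin *.
have eQ : Q = merge_seq (merge S A B) s2 by rewrite /Q merge_seq_cat merge_seq_cons.
have [hCQ hDQ nCD] : [/\ A :|: B \in Q, D \in Q & A :|: B != D].
  by case: hpc hp1 hp2 hp12 => -> /= ? ? ?; rewrite // eq_sym.
have hA0 : A != set0 := hpS.1 _ hA.
have hB0 : B != set0 := hpS.1 _ hB.
have dAB : [disjoint A & B] := hpS.2 _ _ hA hB hAB.
have [hvs hrs] : admissible S s2 /\ merge_seq S s2 = unmerge Q A B.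
  have hpAB := merge_disjoint_blocks hpS hA hB hAB.
  have hAB1 : A :|: B \in merge S A B by rewrite in_merge eqxx orbT.
  rewrite eQ in hCQ.
  have := postpone_merge hv2 hpAB hAB1 hCQ hA0 hB0 dAB nBA.
  by rewrite unmergeK // -eQ.
have [N [x [y [hN ex ey hvxy hrxy]]]] :=
  reorder_merges hpQ hCQ hDQ nCD hA0 hB0 dAB eAB nBA hpc e12 n21 hacyp.
exists N, x, y; split => //.
rewrite is_cseqE -[x :: _]/([:: x; y] ++ s3) !admissible_cat !merge_seq_cat.
rewrite hv1 hvs hrs hvxy hrxy hv3 /=.
by rewrite merge_seq_cat merge_seq_cons in hfin.
Qed.

Lemma crossing_notin (t : ltree G) (N M D : sT) :
  in_TG t -> N :|: D \in t -> N != set0 -> M != set0 -> D != set0 ->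
  [disjoint N & M] -> [disjoint N & D] -> [disjoint M & D] -> N :|: M \notin t.
Proof.
move=> Ht hNDt hN0 hM0 hD0 dNM dND dMD; apply/negP => hNMt.
case/or3P: (TG_laminar Ht hNMt hNDt) => [/subsetP sub|/subsetP sub|dd].
- case/set0Pn: hM0 => m hm.
  have : m \in N :|: D by apply: sub; rewrite inE hm orbT.
  by rewrite inE => /orP[] h; [exact: (disjoint_mem2 dNM h hm) | exact: (disjoint_mem2 dMD hm h)].
- case/set0Pn: hD0 => d hd.
  have : d \in N :|: M by apply: sub; rewrite inE hd orbT.
  by rewrite inE => /orP[] h; [exact: (disjoint_mem2 dND h hd) | exact: (disjoint_mem2 dMD h hd)].
- case/set0Pn: hN0 => n hn.
  by apply: (disjoint_mem2 dd (x := n)); rewrite inE hn.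
Qed.

Lemma flip_tree (t t' K : ltree G) (N M D : sT) :
  in_TG t' -> t = K :|: [set N :|: M] -> t' = K :|: [set N :|: D] ->
  N :|: M :|: D \in K -> N != set0 -> M != set0 -> D != set0 ->
  [disjoint N & M] -> [disjoint N & D] -> [disjoint M & D] ->
  (forall Z, Z \in t -> Z \proper N :|: M :|: D -> Z != N :|: M ->
     [|| Z \subset N, Z \subset M | Z \subset D]) ->
  edge_twin t (N :|: M) t' (N :|: M :|: D) (N :|: D).
Proof.
move=> Ht' et et' hPK hN0 hM0 hD0 dNM dND dMD below.
set C := N :|: M in et below *; set C' := N :|: D in et' *; set P := C :|: D in hPK below *.
have dCD : [disjoint C & D] by rewrite disjoint_sym disjoint_setU // disjoint_sym.
have CP' : C' \proper P := properU_mid hM0 dNM dMD.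
have nC'C : C' != C.
  apply/eqP => e; case/set0Pn: hD0 => d hd.
  by apply: (disjoint_mem2 dCD _ hd); rewrite -e inE hd orbT.
have C'nt : C' \notin t.
  apply/negP => hC't; apply: (straddle_blocksF hN0 hD0 dNM dND (subxx _)).
  exact: below hC't CP' nC'C.
have hC't' : C' \in t' by rewrite et' !inE eqxx orbT.
have Cnt' : C \notin t' := crossing_notin Ht' hC't' hN0 hM0 hD0 dNM dND dMD.
have CnK : C \notin K by apply: contraNN Cnt'; rewrite et' inE => ->.
have C'nK : C' \notin K by apply: contraNN C'nt; rewrite et inE => ->.
split => //.
- by move=> ett; move: hC't'; rewrite ett (negbTE C'nt).
- have gtC' : 1 < #|C'| := card_setU_gt1 hN0 hD0 dND.
  rewrite /internal_edge gtC' (ltn_trans gtC' (proper_card CP')) !andbT.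
  apply/and4P; split; rewrite ?et' ?inE ?hPK ?eqxx ?orbT //.
  apply/forall_inP => X hX; apply/andP => -[pC'X pXP].
  have hXK : X \in K.
    by move: hX; rewrite inE => /orP[//|]; rewrite inE => /eqP eX; rewrite eX properxx in pC'X.
  have nXC : X != C by apply: contraNneq CnK => <-.
  apply: (straddle_blocksF hN0 hD0 dNM dND (proper_sub pC'X)).
  by apply: below pXP nXC; rewrite et inE hXK.
- apply/setP => Z; rewrite /contract !in_setD1 et et' !inE.
  have [->|nZC] := eqVneq Z C; first by rewrite (negbTE CnK) eq_sym (negbTE nC'C).
  have [->|nZC'] := eqVneq Z C'; first by rewrite (negbTE C'nK).
  by rewrite !orbF.
Qed.

Lemma edge_twin_exists (t : ltree G) P C :
  g_acyclic G -> in_TG t -> internal_edge t P C -> exists t' P' C', edge_twin t C t' P' C'.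
Proof.
move=> hg Ht He.
have [s1 [A [B [s2 [D [p [s3 [hs et eC eP hpc]]]]]]]] := internal_edge_cseq hg Ht He.
rewrite eC in hpc.
have [[hA hB hD] [[hA0 hB0 hD0] [[dAB dAD dBD] _]]] := cseq_blocks hg hs et hpc.
have [N [x [y [hN ex ey hs']]]] := flip_cseq hg hs hpc.
have ep : p.1 :|: p.2 = P by case: hpc => -> /=; rewrite eP eC // setUC.
pose K := tree_of (s1 ++ s2 ++ s3) :|: [set P].
have eK : t = K :|: [set C].
  rewrite -et !tree_ofE clusters_cat_cons -catA cat_cons (clusters_cat_cons _ s1 (A, B)).
  by rewrite /= ep eC setUAC.
have eK' : tree_of (s1 ++ s2 ++ x :: y :: s3) = K :|: [set N :|: D].
  rewrite !tree_ofE (catA s1 s2) (clusters_cat_cons _ (s1 ++ s2) x).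
  rewrite -catA (catA s1 s2) (clusters_cat_cons _ (s1 ++ s2) y) -catA ex ey ep.
  by rewrite setUAC.
move: He => /andP[/andP[/and4P[hP hC _ hbet] _] _].
have below := below_parent_blocks (TG_laminar Ht) eC eP hA0 hB0 dAB hbet hA hB hC.
have hPK : P \in K by rewrite !inE eqxx orbT.
have Ht' : in_TG (tree_of (s1 ++ s2 ++ x :: y :: s3)) by exists (s1 ++ s2 ++ x :: y :: s3).
exists (tree_of (s1 ++ s2 ++ x :: y :: s3)), P, (N :|: D).
subst C P; case: hN => eN; subst N.
- exact: flip_tree Ht' eK eK' hPK hA0 hB0 hD0 dAB dAD dBD below.
- rewrite [A :|: B]setUC in eK hPK below *.
  apply: flip_tree Ht' eK eK' hPK hB0 hA0 hD0 _ dBD dAD _; first by rewrite disjoint_sym.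
  by move=> Z hZ hZP hZC; rewrite orbCA below // setUC.
Qed.

End ContractionTrees.

Unset Implicit Arguments.

Theorem lemma1 (G : dgraph) (HG : in_calG G) (t : ltree G) (Ht : in_TG t)
  (P C : {set vert G}) (He : internal_edge t P C) :
  exists (t' : ltree G) (P' C' : {set vert G}),
    [/\ in_TG t', t' <> t, internal_edge t' P' C' & contract t C = contract t' C']
    /\ forall (t'' : ltree G) (P'' C'' : {set vert G}),
         [/\ in_TG t'', t'' <> t, internal_edge t'' P'' C''
           & contract t C = contract t'' C''] ->
         [/\ t'' = t', P'' = P' & C'' = C'].
Proof.
have hg : g_acyclic G by case: HG.
have [t' [P' [C' twin']]] := edge_twin_exists hg Ht He.
exists t', P', C'; split => // t'' P'' C'' twin''.
exact: edge_twin_unique hg Ht He twin' twin''.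
Qed.
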